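(* Let $w$ and $w''$ be two words with nonnegative integer letters of the same length. If $\mathrm{Zero}\,w=\mathrm{Zero}\,w''$ and $\mathrm{DES}\,\mathrm{Pos}\,w=\mathrm{DES}\,\mathrm{Pos}\,w''$, then $\mathrm{Zero}\,{\bf F}_3(w)=\mathrm{Zero}\,{\bf F}_3(w'')$.
   Context: For a word $w=x_1\cdots x_n$ with nonnegative integer letters: $\mathrm{DES}\,w=\{i:1\le i\le n-1,\ x_i>x_{i+1}\}$; $\mathrm{Zero}\,w=\{i:x_i=0\}$; $\mathrm{Pos}\,w$ is the subword of positive letters of $w$. The map ${\bf F}_3$ on all finite words with nonnegative letters is defined by induction on the length $n$. If $n\le1$, or if all letters of $w$ other than the last are $0$, then ${\bf F}_3(w)=w$. Otherwise write uniquely $w=w'a0^rb$, where $a\ge1$ is the rightmost positive letter among the first $n-1$ letters, $r\ge0$, $b\ge0$ is the last letter and $w'$ is a possibly empty word. (1) If $a\le b$: ${\bf F}_3(w)={\bf F}_3(w'a0^r)\,b$. (2) If $a>b$ and $r\ge1$: writing ${\bf F}_3(w'a0^r)=w''c$ with $c$ a letter, ${\bf F}_3(w)=0\,w''\,b$. (3) If $a>b$ and $r=0$: writing ${\bf F}_3(w'a)=0^{m_1}x_1v_10^{m_2}x_2v_2\cdots0^{m_k}x_kv_k$ with $m_1\ge0$, $m_2,\dots,m_k\ge1$, $x_1,\dots,x_k$ positive letters and $v_1,\dots,v_k$ possibly empty words of positive letters, ${\bf F}_3(w)=x_10^{m_1}v_1x_20^{m_2}v_2\cdots x_k0^{m_k}v_k\,b$.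 *)

From mathcomp Require Import all_boot.
Set Implicit Arguments. Unset Strict Implicit. Unset Printing Implicit Defensive.

(* Words are sequences of nonnegative integers: seq nat.
   Positions are 1-indexed as in the paper. *)

Definition DES (w : seq nat) : seq nat :=
  [seq i <- iota 1 (size w).-1 | nth 0 w i < nth 0 w i.-1].

Definition Zero (w : seq nat) : seq nat :=
  [seq i <- iota 1 (size w) | nth 0 w i.-1 == 0].

Definition Pos (w : seq nat) : seq nat := [seq x <- w | 0 < x].

(* Case (3) rearrangement: for u = 0^{m1} x1 v1 0^{m2} x2 v2 ... 0^{mk} xk vk,
   returns x1 0^{m1} v1 x2 0^{m2} v2 ... xk 0^{mk} vk.
   The decomposition uses maximal zero runs and maximal positive runs.
   (Trailing zeros with no following positive letter, which are outside
   the paper's decomposition, are left unchanged.) *)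
Fixpoint swap_blocks_fuel (fuel : nat) (u : seq nat) : seq nat :=
  match fuel with
  | 0 => u
  | fuel'.+1 =>
    let m := find (fun x => 0 < x) u in
    let rest := drop m u in
    match rest with
    | [::] => u
    | x :: rest' =>
      let k := find (fun y => y == 0) rest' in
      x :: nseq m 0 ++ take k rest' ++ swap_blocks_fuel fuel' (drop k rest')
    end
  end.

Definition swap_blocks (u : seq nat) : seq nat := swap_blocks_fuel (size u) u.

Fixpoint F3_fuel (fuel : nat) (w : seq nat) : seq nat :=
  match fuel with
  | 0 => w
  | fuel'.+1 =>
    match w with
    | [::] => w
    | y :: s =>
      let p := belast y s in
      let b := last y s in
      if all (fun x => x == 0) p then w
      else
        let j := (size p - (find (fun x => 0 < x) (rev p)).+1)%N in
        (* index (0-based) in p of the rightmost positive letter a *)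
        let a := nth 0 p j in
        let r := ((size p).-1 - j)%N in
        if a <= b then rcons (F3_fuel fuel' p) b
        else if 0 < r then
          rcons (0 :: take (size p).-1 (F3_fuel fuel' p)) b
          (* F3(w'a0^r) = w'' c ; result 0 w'' b *)
        else rcons (swap_blocks (F3_fuel fuel' p)) b
    end
  end.

Definition F3 (w : seq nat) : seq nat := F3_fuel (size w) w.

(* Only the zero pattern of F3 w is at stake, and it can be computed by the
   same recursion as F3 once one knows, at each step, which case applies.
   Case (2) versus (3) is read off the zero pattern (is the last letter of
   the prefix zero?), and the test a <= b is too: for b = 0 it fails since
   a > 0, and for b > 0 the letter a is the last letter of Pos of the prefix,
   so a > b says exactly that the last position of Pos w is a descent. The
   block rearrangement of case (3) only depends on the positions of zeros.
   Hence the zero pattern of F3 w is a function of the zero pattern of w and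
   of DES Pos w, by induction on the length. *)

From mathcomp Require Import all_boot zify.
Set Implicit Arguments. Unset Strict Implicit. Unset Printing Implicit Defensive.

Definition zero_pattern (u : seq nat) : seq bool := [seq x == 0 | x <- u].

Lemma zero_pattern_rcons u x :
  zero_pattern (rcons u x) = rcons (zero_pattern u) (x == 0).
Proof. exact: map_rcons. Qed.

Lemma zero_pattern_cons x u : zero_pattern (x :: u) = (x == 0) :: zero_pattern u.
Proof. by []. Qed.

Lemma zero_pattern_rcons_inj u x v y :
  zero_pattern (rcons u x) = zero_pattern (rcons v y) ->
  zero_pattern u = zero_pattern v /\ (x == 0) = (y == 0).
Proof. by rewrite !zero_pattern_rcons => /rcons_inj[]. Qed.

Lemma zero_pattern_rev u : zero_pattern (rev u) = rev (zero_pattern u).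
Proof. exact: map_rev. Qed.

Lemma size_zero_pattern u : size (zero_pattern u) = size u.
Proof. exact: size_map. Qed.

Lemma eq_zero_pattern_size u v :
  zero_pattern u = zero_pattern v -> size u = size v.
Proof. by move=> eq_uv; rewrite -size_zero_pattern eq_uv size_zero_pattern. Qed.

Lemma nth_zero_pattern u i :
  i < size u -> nth false (zero_pattern u) i = (nth 0 u i == 0).
Proof. exact: nth_map. Qed.

Lemma find_pos_zero_pattern u :
  find (fun x => 0 < x) u = find negb (zero_pattern u).
Proof. by rewrite find_map; apply: eq_find => x /=; rewrite lt0n. Qed.

Lemma find_eq0_zero_pattern u :
  find (fun x => x == 0) u = find id (zero_pattern u).
Proof. by rewrite find_map. Qed.

Lemma eq_zero_pattern_has_pos u v : zero_pattern u = zero_pattern v ->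
  has (fun x => 0 < x) u = has (fun x => 0 < x) v.
Proof.
move=> eq_uv; rewrite !has_find !find_pos_zero_pattern eq_uv.
by rewrite (eq_zero_pattern_size eq_uv).
Qed.

Lemma eq_zero_pattern_find_pos_rev u v : zero_pattern u = zero_pattern v ->
  find (fun x => 0 < x) (rev u) = find (fun x => 0 < x) (rev v).
Proof. by move=> eq_uv; rewrite !find_pos_zero_pattern !zero_pattern_rev eq_uv. Qed.

Lemma zero_pattern_drop n u : zero_pattern (drop n u) = drop n (zero_pattern u).
Proof. exact: map_drop. Qed.

Lemma zero_pattern_take n u : zero_pattern (take n u) = take n (zero_pattern u).
Proof. exact: map_take. Qed.

Lemma mem_Zero u i : (i \in Zero u) = (0 < i <= size u) && (nth 0 u i.-1 == 0).
Proof. by rewrite mem_filter mem_iota andbC; congr (_ && _); lia. Qed.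

Lemma eq_Zero u v : zero_pattern u = zero_pattern v -> Zero u = Zero v.
Proof.
move=> eq_uv; have eq_size := eq_zero_pattern_size eq_uv.
rewrite /Zero eq_size; apply: eq_in_filter => i; rewrite mem_iota => /andP[i_gt0 i_le].
have lt_iv : i.-1 < size v by lia.
by rewrite -!nth_zero_pattern ?eq_size // eq_uv.
Qed.

Lemma eq_zero_pattern_Zero u v :
  size u = size v -> Zero u = Zero v -> zero_pattern u = zero_pattern v.
Proof.
move=> eq_size eq_Z; apply: (eq_from_nth (x0 := false)).
  by rewrite !size_zero_pattern.
move=> i; rewrite size_zero_pattern => lt_iu.
have lt_iv : i < size v by rewrite -eq_size.
rewrite !nth_zero_pattern //.
have mem_i w : i < size w -> (nth 0 w i == 0) = (i.+1 \in Zero w).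
  by move=> lt_iw; rewrite mem_Zero ltnS lt_iw.
by rewrite !mem_i // eq_Z.
Qed.

Lemma Pos_rcons u x : Pos (rcons u x) = if 0 < x then rcons (Pos u) x else Pos u.
Proof. exact: filter_rcons. Qed.

Lemma eq_zero_pattern_size_Pos u v :
  zero_pattern u = zero_pattern v -> size (Pos u) = size (Pos v).
Proof.
have count_pos w : size (Pos w) = count negb (zero_pattern w).
  by rewrite size_filter count_map; apply: eq_count => x /=; rewrite lt0n.
by move=> eq_uv; rewrite !count_pos eq_uv.
Qed.

Lemma all_eq0 u : all (fun x => x == 0) u = ~~ has (fun x => 0 < x) u.
Proof. by rewrite -all_predC; apply: eq_all => x; rewrite /= -eqn0Ngt. Qed.

Lemma has_Pos u : has (fun x => 0 < x) u -> 0 < last 0 (Pos u).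
Proof.
elim/last_ind: u => [|u x IHu] //; rewrite has_rcons Pos_rcons.
by case: (posnP x) => [_ /= /IHu|x_gt0] //=; rewrite last_rcons.
Qed.

Lemma nth_last_pos u : has (fun x => 0 < x) u ->
  nth 0 u (size u - (find (fun x => 0 < x) (rev u)).+1) = last 0 (Pos u).
Proof.
elim/last_ind: u => [|u x IHu] //.
rewrite has_rcons rev_rcons size_rcons Pos_rcons /=.
case: (posnP x) => [->|x_gt0] /=; last by rewrite subn1 nth_rcons ltnn eqxx last_rcons.
rewrite subSS => has_u; have u_gt0 : 0 < size u by case: u has_u {IHu}.
by rewrite nth_rcons ifT ?IHu //; lia.
Qed.

Lemma DES_rcons u x : DES (rcons u x) =
  DES u ++ (if (0 < size u) && (x < last 0 u) then [:: size u] else [::]).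
Proof.
rewrite /DES size_rcons /=; case Hs: (size u) => [|n] //.
have -> : iota 1 n.+1 = iota 1 n ++ [:: n.+1] by rewrite -[n.+1]addn1 iotaD addnC.
rewrite filter_cat /= -Hs; congr (_ ++ _).
  apply: eq_in_filter => i; rewrite mem_iota => /andP[i_gt0 i_lt].
  by rewrite !nth_rcons ifT ?ifT //; lia.
by rewrite !nth_rcons ltnn eqxx Hs ltnSn -nth_last Hs.
Qed.

Lemma DES_lt_size u i : i \in DES u -> i < size u.
Proof. by rewrite mem_filter mem_iota => /andP[_]; lia. Qed.

Lemma DES_rcons_inj u x v y : size u = size v ->
  DES (rcons u x) = DES (rcons v y) ->
  DES u = DES v /\
  ((0 < size u) && (x < last 0 u)) = ((0 < size v) && (y < last 0 v)).
Proof.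
set t := fun w z => if (0 < size w) && (z < last 0 w) then [:: size w] else [::].
have DES_filter w z : DES w = [seq i <- DES w ++ t w z | i < size w].
  rewrite filter_cat /t; case: ifP => _ /=; rewrite ?ltnn ?cats0;
  by rewrite (eq_in_filter (a2 := predT)) ?filter_predT // => i /DES_lt_size.
have mem_size w z : ((0 < size w) && (z < last 0 w)) = (size w \in DES w ++ t w z).
  rewrite mem_cat; have -> : (size w \in DES w) = false by apply/negP => /DES_lt_size; rewrite ltnn.
  by rewrite /t; case: ifP; rewrite ?inE ?eqxx.
move=> eq_size; rewrite !DES_rcons -/(t u x) -/(t v y) => eq_DES.
split; first by rewrite (DES_filter u x) (DES_filter v y) eq_DES eq_size.
by rewrite (mem_size u x) (mem_size v y) eq_DES eq_size.
Qed.

Lemma zero_pattern_swap_blocks_fuel n u v : zero_pattern u = zero_pattern v ->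
  zero_pattern (swap_blocks_fuel n u) = zero_pattern (swap_blocks_fuel n v).
Proof.
elim: n u v => [|n IHn] u v eq_uv //=.
rewrite !find_pos_zero_pattern eq_uv.
have := congr1 (drop (find negb (zero_pattern v))) eq_uv; rewrite -!zero_pattern_drop.
case: (drop _ u) => [|x u']; case: (drop _ v) => [|y v'] //= [eq_xy eq_uv'].
rewrite !find_eq0_zero_pattern eq_uv' /zero_pattern !map_cat !map_nseq.
rewrite -!/(zero_pattern _) !zero_pattern_take eq_xy eq_uv'; congr [:: _ & _ ++ (_ ++ _)].
by apply: IHn; rewrite !zero_pattern_drop eq_uv'.
Qed.

Lemma zero_pattern_swap_blocks u v : zero_pattern u = zero_pattern v ->
  zero_pattern (swap_blocks u) = zero_pattern (swap_blocks v).
Proof.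
by move=> eq_uv; rewrite /swap_blocks (eq_zero_pattern_size eq_uv); apply: zero_pattern_swap_blocks_fuel.
Qed.

Lemma F3_fuel_rcons_all0 n u b :
  ~~ has (fun x => 0 < x) u -> F3_fuel n.+1 (rcons u b) = rcons u b.
Proof. by case: u => [|y u] //=; rewrite belast_rcons -/(rcons _ _) all_eq0 => ->. Qed.

(* [0 < find _ (rev u)] says that u ends with a zero, i.e. r >= 1. *)
Lemma F3_fuel_rcons n u b : has (fun x => 0 < x) u ->
  F3_fuel n.+1 (rcons u b) =
  if last 0 (Pos u) <= b then rcons (F3_fuel n u) b
  else if 0 < find (fun x => 0 < x) (rev u)
       then rcons (0 :: take (size u).-1 (F3_fuel n u)) b
       else rcons (swap_blocks (F3_fuel n u)) b.
Proof.
case: u => [|y u] // has_u.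
rewrite /= belast_rcons last_rcons -/(rcons _ _) all_eq0 has_u /= -(nth_last_pos has_u).
have : find (fun x => 0 < x) (rev (y :: u)) < (size u).+1.
  by rewrite -[(size u).+1](size_rev (y :: u)) -has_find has_rev.
move: (find _ _) => k lt_k.
by have -> : (0 < size u - ((size u).+1 - k.+1)) = (0 < k) by apply/idP/idP; lia.
Qed.

Section ZeroPatternStep.

Variables (u v : seq nat) (x y : nat).
Hypothesis eq_pattern : zero_pattern (rcons u x) = zero_pattern (rcons v y).
Hypothesis eq_DES : DES (Pos (rcons u x)) = DES (Pos (rcons v y)).

Lemma eq_DES_Pos_prefix : DES (Pos u) = DES (Pos v).
Proof.
have [eq_prefix eq_xy] := zero_pattern_rcons_inj eq_pattern.
move: eq_DES; rewrite !Pos_rcons !lt0n -eq_xy; case: (x == 0) => //=.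
by case/(DES_rcons_inj (eq_zero_pattern_size_Pos eq_prefix)).
Qed.

Lemma eq_last_Pos_leq : has (fun z => 0 < z) u ->
  (last 0 (Pos u) <= x) = (last 0 (Pos v) <= y).
Proof.
have [eq_prefix eq_xy] := zero_pattern_rcons_inj eq_pattern.
move=> has_u; have has_v : has (fun z => 0 < z) v.
  by rewrite -(eq_zero_pattern_has_pos eq_prefix).
have [u_gt0 v_gt0] := (has_Pos has_u, has_Pos has_v).
case: (posnP x) => [x0|x_gt0].
  have /eqP y0 : y == 0 by rewrite -eq_xy x0.
  by rewrite x0 y0 !leqn0 (gtn_eqF u_gt0) (gtn_eqF v_gt0).
have y_gt0 : 0 < y by rewrite lt0n -eq_xy -lt0n.
have size_gt0 w : 0 < last 0 (Pos w) -> 0 < size (Pos w) by case: (Pos w).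
move: eq_DES; rewrite !Pos_rcons x_gt0 y_gt0.
case/(DES_rcons_inj (eq_zero_pattern_size_Pos eq_prefix)) => _.
by rewrite (size_gt0 u) ?(size_gt0 v) //= => eq_lt; apply: negb_inj; rewrite -!ltnNge.
Qed.

End ZeroPatternStep.

Lemma zero_pattern_F3_fuel n u v :
  zero_pattern u = zero_pattern v -> DES (Pos u) = DES (Pos v) ->
  zero_pattern (F3_fuel n u) = zero_pattern (F3_fuel n v).
Proof.
elim: n u v => [|n IHn] u v //.
case/lastP: u => [|u x]; case/lastP: v => [|v y] //;
  try by move/eq_zero_pattern_size; rewrite ?size_rcons.
move=> eq_pattern eq_DES; have [eq_prefix eq_xy] := zero_pattern_rcons_inj eq_pattern.
have IHuv := IHn u v eq_prefix (eq_DES_Pos_prefix eq_pattern eq_DES).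
have eq_has := eq_zero_pattern_has_pos eq_prefix.
have [has_u|hasN_u] := boolP (has (fun z => 0 < z) u); last first.
  by rewrite !F3_fuel_rcons_all0 -?eq_has // !zero_pattern_rcons eq_prefix eq_xy.
rewrite !F3_fuel_rcons -?eq_has // (eq_last_Pos_leq eq_pattern eq_DES has_u).
rewrite (eq_zero_pattern_find_pos_rev eq_prefix) (eq_zero_pattern_size eq_prefix).
case: ifP => _; [|case: ifP => _]; rewrite !zero_pattern_rcons eq_xy; congr rcons.
- exact: IHuv.
- by rewrite !zero_pattern_cons !zero_pattern_take IHuv.
- exact: zero_pattern_swap_blocks.
Qed.

Theorem proposition4p1 (w w'' : seq nat) :
  size w = size w'' ->
  Zero w = Zero w'' ->
  DES (Pos w) = DES (Pos w'') ->
  Zero (F3 w) = Zero (F3 w'').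
Proof.
move=> eq_size eq_Z eq_DES; apply: eq_Zero.
rewrite /F3 eq_size; apply: zero_pattern_F3_fuel => //.
exact: eq_zero_pattern_Zero.
Qed.
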